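(* Let $\Gamma$ be a symmetric bimatrix game with strategy set $C_1$ and row-player utility $u_1$, and let $N\ge2$ be finite. Let $\Gamma^{N}$ be the $N$-player game in which every player has strategy set $C_1$ and player $i$ has utility $u_i^{N}(s_1,\dots,s_N)=\sum_{j\neq i}u_1(s_i,s_j)$. Then the symmetric correlated equilibria of $\Gamma^N$ (correlated equilibria of $\Gamma^N$ whose distribution on $C_1^N$ is invariant under all permutations of the players) are exactly the $N$-exchangeable equilibria of $\Gamma$.
   Context: A symmetric bimatrix game: two players with common finite strategy set $C_1$ and utilities with $u_1(s_1,s_2)=u_2(s_2,s_1)$. For a finite game with players $i$, a correlated equilibrium is a distribution $\pi$ on strategy profiles such that for every player $i$ and all $s_i,t_i$, $\sum_{s_{-i}}[u_i(t_i,s_{-i})-u_i(s)]\pi(s)\le0$. A distribution on $C_1^N$ is $N$-exchangeable if it is invariant under all permutations of the $N$ coordinates. An $N$-exchangeable equilibrium of $\Gamma$ is an $N$-exchangeable distribution of random variables $X_1,\dots,X_N$ such that the marginal distribution of $(X_1,X_2)$ is a correlated equilibrium of $\Gamma$. *)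

From mathcomp Require Import all_boot all_order all_algebra all_fingroup.
Set Implicit Arguments. Unset Strict Implicit. Unset Printing Implicit Defensive.
Import Order.TTheory GRing.Theory Num.Theory.
Local Open Scope ring_scope.

Definition profile (C : finType) (n : nat) := {ffun 'I_n -> C}.

Definition is_distr (R : realFieldType) (T : finType) (pi : T -> R) : Prop :=
  (forall x, 0 <= pi x) /\ \sum_(x : T) pi x = 1.

Definition deviate (C : finType) (n : nat) (s : profile C n) (i : 'I_n) (t : C)
  : profile C n := [ffun k => if k == i then t else s k].

Definition correlated_eq (R : realFieldType) (C : finType) (n : nat)
  (U : 'I_n -> profile C n -> R) (pi : profile C n -> R) : Prop :=
  is_distr pi /\
  forall (i : 'I_n) (si ti : C),
    \sum_(s : profile C n | s i == si) (U i (deviate s i ti) - U i s) * pi s <= 0.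

Definition exchangeable (R : realFieldType) (C : finType) (n : nat)
  (pi : profile C n -> R) : Prop :=
  forall (sigma : {perm 'I_n}) (s : profile C n),
    pi [ffun k => s (sigma k)] = pi s.

(* symmetric bimatrix game Gamma from the row utility u :
   u_1(s1,s2) = u(s1,s2), u_2(s1,s2) = u_1(s2,s1) = u(s2,s1) *)
Definition p1 : 'I_2 := ord0.
Definition p2 : 'I_2 := ord_max.
Definition bimatrix_util (R : realFieldType) (C : finType) (u : C -> C -> R)
  (i : 'I_2) (s : profile C 2) : R :=
  if i == p1 then u (s p1) (s p2) else u (s p2) (s p1).

Definition multi_util (R : realFieldType) (C : finType) (u : C -> C -> R)
  (n : nat) (i : 'I_n) (s : profile C n) : R :=
  \sum_(j : 'I_n | j != i) u (s i) (s j).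

Definition pair_marginal (R : realFieldType) (C : finType) (n : nat)
  (i j : 'I_n) (pi : profile C n -> R) : profile C 2 -> R :=
  fun a => \sum_(s : profile C n | (s i == a p1) && (s j == a p2)) pi s.

Definition exchangeable_eq (R : realFieldType) (C : finType) (u : C -> C -> R)
  (n : nat) (i1 i2 : 'I_n) (pi : profile C n -> R) : Prop :=
  is_distr pi /\ exchangeable pi /\
  correlated_eq (bimatrix_util u) (pair_marginal i1 i2 pi).

From mathcomp Require Import all_boot all_order all_algebra all_fingroup.
Import GRing.Theory Num.Theory.
Local Open Scope ring_scope.
Set Implicit Arguments. Unset Strict Implicit.

(* In both games a deviation of player i from s_i to t_i changes the payoff by
   a sum over opponents j of u(t_i, s_j) - u(s_i, s_j), so every equilibrium
   constraint is a sum of "pairwise gains" G_{ij}(s_i, t_i), each depending on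
   pi only through its (i, j)-marginal.  For an exchangeable pi, G_{ij} does
   not depend on the ordered pair i != j, so the N-player constraint is
   (N - 1) G_{12} <= 0 and the constraints of the (X_1, X_2)-marginal in
   Gamma are G_{12} <= 0 and G_{21} <= 0: the two families are equivalent. *)

Section PairMarginal.
Variables (R : realFieldType) (C : finType) (n : nat) (pi : profile C n -> R).

Definition pair_of (i j : 'I_n) (s : profile C n) : profile C 2 :=
  [ffun k => s (if k == p1 then i else j)].

Lemma pair_ofE i j s a :
  (pair_of i j s == a) = (s i == a p1) && (s j == a p2).
Proof.
apply/eqP/andP => [<-|[/eqP si /eqP sj]]; first by rewrite !ffunE.
apply/ffunP => -[[|[|k]] lt_k2] //=; rewrite ffunE /=.
- by rewrite si; congr (a _); apply: val_inj.
- by rewrite sj; congr (a _); apply: val_inj.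
Qed.

Lemma sum_pair_marginal i j (P : pred (profile C 2)) (g : profile C 2 -> R) :
  \sum_(a | P a) g a * pair_marginal i j pi a =
  \sum_(s | P (pair_of i j s)) g (pair_of i j s) * pi s.
Proof.
rewrite [RHS](partition_big (pair_of i j) P) //=.
apply: eq_bigr => a Pa; rewrite /pair_marginal big_distrr /=.
apply: eq_big => s; rewrite -pair_ofE; last by move/eqP->.
by case: eqP => [->|]; rewrite ?Pa ?andbF.
Qed.

Lemma is_distr_pair_marginal i j :
  is_distr pi -> is_distr (pair_marginal i j pi).
Proof.
move=> [pi_ge0 pi_sum1]; split=> [a|]; first exact: sumr_ge0.
have := sum_pair_marginal i j predT (fun _ => 1).
under eq_bigr do rewrite mul1r; under [RHS]eq_bigr do rewrite mul1r.
by move=> ->.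
Qed.

End PairMarginal.

Section PairwiseGain.
Variables (R : realFieldType) (C : finType) (u : C -> C -> R) (n : nat).
Variable pi : profile C n -> R.

Definition pairwise_gain (si ti : C) (i j : 'I_n) :=
  \sum_(s : profile C n | s i == si) (u ti (s j) - u si (s j)) * pi s.

Lemma pairwise_gain_perm si ti (sigma : {perm 'I_n}) i j :
  exchangeable pi -> pairwise_gain si ti i j = pairwise_gain si ti (sigma i) (sigma j).
Proof.
move=> pi_exch; rewrite /pairwise_gain.
rewrite (reindex (fun s : profile C n => [ffun k => s (sigma k)])) /=.
  by apply: eq_big => [s|s _]; rewrite ?pi_exch !ffunE.
apply: onW_bij; exists (fun s : profile C n => [ffun k => s ((sigma^-1)%g k)]) => s;
  by apply/ffunP => k; rewrite !ffunE ?permKV ?permK.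
Qed.

(* Two transpositions move any ordered pair of distinct players to any other. *)
Lemma pairwise_gain_exchangeable si ti (i j i' j' : 'I_n) :
  exchangeable pi -> i != j -> i' != j' ->
  pairwise_gain si ti i j = pairwise_gain si ti i' j'.
Proof.
move=> pi_exch neq_ij neq_ij'.
rewrite (pairwise_gain_perm si ti (tperm i i')) // tpermL.
set k := tperm i i' j.
have neq_ki' : k != i' by rewrite /k -{2}(tpermL i i') (inj_eq perm_inj) eq_sym.
by rewrite (pairwise_gain_perm si ti (tperm k j')) // tpermL tpermD // eq_sym.
Qed.

Lemma multi_util_deviation_gain (i : 'I_n) si ti :
  \sum_(s : profile C n | s i == si)
     (multi_util u i (deviate s i ti) - multi_util u i s) * pi s =
  \sum_(j | j != i) pairwise_gain si ti i j.
Proof.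
rewrite /pairwise_gain -exchange_big /=; apply: eq_bigr => s /eqP si_s.
rewrite /multi_util -sumrB mulr_suml; apply: eq_bigr => j neq_ji.
by rewrite !ffunE (negbTE neq_ji) eqxx si_s.
Qed.

Lemma bimatrix_deviation_gain_p1 (i j : 'I_n) si ti :
  \sum_(a : profile C 2 | a p1 == si)
     (bimatrix_util u p1 (deviate a p1 ti) - bimatrix_util u p1 a)
       * pair_marginal i j pi a = pairwise_gain si ti i j.
Proof.
rewrite sum_pair_marginal; apply: eq_big => s; first by rewrite ffunE.
by rewrite /bimatrix_util !ffunE /= => /eqP ->.
Qed.

Lemma bimatrix_deviation_gain_p2 (i j : 'I_n) si ti :
  \sum_(a : profile C 2 | a p2 == si)
     (bimatrix_util u p2 (deviate a p2 ti) - bimatrix_util u p2 a)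
       * pair_marginal i j pi a = pairwise_gain si ti j i.
Proof.
rewrite sum_pair_marginal; apply: eq_big => s; first by rewrite ffunE.
by rewrite /bimatrix_util !ffunE /= => /eqP ->.
Qed.

Section Exchangeable.
Variables (i j : 'I_n).
Hypotheses (pi_exch : exchangeable pi) (neq_ij : i != j).

Lemma multi_correlated_eqE :
  is_distr pi ->
  correlated_eq (multi_util u (n:=n)) pi <->
  forall si ti, pairwise_gain si ti i j <= 0.
Proof.
move=> pi_distr; split=> [[_ ce] si ti | gain_le0]; last first.
  split=> // k si ti; rewrite multi_util_deviation_gain.
  apply: sumr_le0 => l neq_lk.
  by rewrite (pairwise_gain_exchangeable si ti (i':=i) (j':=j) pi_exch _ neq_ij) // eq_sym.
have := ce i si ti; rewrite multi_util_deviation_gain.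
rewrite (eq_bigr (fun _ => pairwise_gain si ti i j)); last first.
  by move=> l neq_li; apply: pairwise_gain_exchangeable; rewrite // eq_sym.
rewrite sumr_const pmulrn_lle0 //.
by apply/card_gt0P; exists j; rewrite unfold_in /= eq_sym.
Qed.

Lemma bimatrix_correlated_eqE :
  is_distr pi ->
  correlated_eq (bimatrix_util u) (pair_marginal i j pi) <->
  forall si ti, pairwise_gain si ti i j <= 0.
Proof.
move=> pi_distr; split=> [[_ ce] si ti | gain_le0].
  by have := ce p1 si ti; rewrite bimatrix_deviation_gain_p1.
split; first exact: is_distr_pair_marginal.
move=> -[[|[|k]] lt_k2] si ti //.
- by rewrite (_ : Ordinal _ = p1) ?bimatrix_deviation_gain_p1 //; apply: val_inj.
- rewrite (_ : Ordinal _ = p2) ?bimatrix_deviation_gain_p2; last exact: val_inj.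
  by rewrite (pairwise_gain_exchangeable si ti (i':=i) (j':=j) pi_exch _ neq_ij) // eq_sym.
Qed.

End Exchangeable.
End PairwiseGain.

Theorem proposition4p10 (R : realFieldType) (C : finType) (u : C -> C -> R)
  (N : nat) (hN : (2 <= N)%N) (pi : profile C N -> R) :
  let i1 : 'I_N := Ordinal (ltn_trans (ltnSn 0) hN) in
  let i2 : 'I_N := Ordinal hN in
  (correlated_eq (multi_util u (n:=N)) pi /\ exchangeable pi)
  <-> exchangeable_eq u i1 i2 pi.
Proof.
move=> i1 i2; have neq_i12 : i1 != i2 by [].
split=> [[ce pi_exch] | [pi_distr [pi_exch ce]]].
  have pi_distr := ce.1.
  split=> //; split=> //.
  by apply/(bimatrix_correlated_eqE u pi_exch neq_i12 pi_distr)/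
           (multi_correlated_eqE u pi_exch neq_i12 pi_distr).
split=> //.
by apply/(multi_correlated_eqE u pi_exch neq_i12 pi_distr)/
         (bimatrix_correlated_eqE u pi_exch neq_i12 pi_distr).
Qed.
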